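(* Let $\Gamma$ be a gain operator on $\ell^\infty_+(\mathcal I)$. Assume there exists a path $\sigma:\mathbb R_+\to\ell^\infty_+(\mathcal I)$ which is continuous (in norm) and increasing (i.e. $r_1\le r_2\Rightarrow \sigma(r_1)\le\sigma(r_2)$), and which satisfies: (i) there is $\rho\in\mathcal K_\infty$ with $\Gamma_\rho(\sigma(r))\le\sigma(r)$ for all $r\ge 0$; (ii) there are $\varphi_{\min},\varphi_{\max}\in\mathcal K_\infty$ with $\varphi_{\min}(r)\mathbf 1\le\sigma(r)\le\varphi_{\max}(r)\mathbf 1$ for all $r\ge0$. Then there exists a path of strict decay for $\Gamma$.
   Context: Let $\mathcal I$ be a nonempty countable index set. $\ell^\infty(\mathcal I)$ is the Banach space of real families $s=(s_i)_{i\in\mathcal I}$ with $\|s\|:=\sup_i|s_i|<\infty$, and $\ell^\infty_+(\mathcal I):=\{s\in\ell^\infty(\mathcal I):s_i\ge0\ \forall i\}$. We write $s^1\le s^2$ iff $s^1_i\le s^2_i$ for all $i$, and $s^1\ll s^2$ iff $\inf_i(s^2_i-s^1_i)>0$. $\mathbf 1$ is the vector with all entries $1$. $\mathcal K$ is the set of continuous strictly increasing $\gamma:\mathbb R_+\to\mathbb R_+$ with $\gamma(0)=0$, and $\mathcal K_\infty$ the set of unbounded $\gamma\in\mathcal K$. A function $\varphi\in\mathcal K_\infty$ acts on $\ell^\infty_+(\mathcal I)$ componentwise: $\varphi(s):=(\varphi(s_i))_i$. For $\mathcal J\subset\mathcal I$ and $s\in\ell^\infty_+(\mathcal I)$, $s_{|\mathcal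 J}$ is the vector agreeing with $s$ on $\mathcal J$ and equal to $0$ elsewhere. Gain operator: for each $i\in\mathcal I$ let $\mathcal I_i\subset\mathcal I\setminus\{i\}$ be a finite (possibly empty) set; $\mathcal G$ is the directed graph with vertex set $\mathcal I$ and edges $ji$ for $i\in\mathcal I$, $j\in\mathcal I_i$. Let $\gamma_{ij}\in\mathcal K_\infty$ ($ji\in E(\mathcal G)$) be a pointwise equicontinuous family (for all $r_0\ge0,\varepsilon>0$ there is $\delta>0$ with $|\gamma_{ij}(r)-\gamma_{ij}(r_0)|\le\varepsilon$ whenever $|r-r_0|\le\delta$, for all edges $ji$). Let $\mu_i:\ell^\infty_+(\mathcal I)\to[0,\infty]$, $i\in\mathcal I$, satisfy: (M1) there is $\xi\in\mathcal K_\infty$ with $\mu_i(0)=0$ and $\mu_i(s)\ge\xi(\|s\|)$ for all $s,i$; (M2) $0\le s^1\le s^2\Rightarrow\mu_i(s^1)\le\mu_i(s^2)$; (M3) for every finite $\mathcal J\subset\mathcal I$ and every $i$, the restriction of $\mu_i$ to $\{s: s_k=0\ \forall k\notin\mathcal J\}$ is finite-valued and continuous; (M4) for every norm-bounded $A\subset\ell^\infty_+(\mathcal I)$ and $\varepsilon>0$ there is $\delta>0$ such that for all $s^0\in A$ and $s\in\ell^\infty_+(\mathcal I)$ with $\|s-s^0\|\le\delta$ we have $\sup_i|\mu_i(s_{|\mathcal I_i})-\mu_i(s^0_{|\mathcal I_i})|\le\varepsilon$. The gain operator is $\Gamma:\ell^\infty_+(\mathcal I)\to\ell^\infty_+(\mathcal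 I)$, $\Gamma_i(s):=\mu_i([\gamma_{ij}(s_j)]_{j\in\mathcal I_i})$, where the argument is the vector with entries $\gamma_{ij}(s_j)$ at $j\in\mathcal I_i$ and $0$ elsewhere. For $\rho\in\mathcal K_\infty$, $\Gamma_\rho:=(\mathrm{id}+\rho)\circ\Gamma$. A path of strict decay for $\Gamma$ is a map $\sigma:\mathbb R_+\to\ell^\infty_+(\mathcal I)$ such that: (i) there is $\rho\in\mathcal K_\infty$ with $\Gamma_\rho(\sigma(r))\le\sigma(r)$ for all $r\ge0$; (ii) there are $\varphi_{\min},\varphi_{\max}\in\mathcal K_\infty$ with $\varphi_{\min}(r)\mathbf 1\le\sigma(r)\le\varphi_{\max}(r)\mathbf 1$ for all $r\ge0$; (iii) each component $\sigma_i$ is a $\mathcal K_\infty$-function; (iv) for every compact interval $K\subset(0,\infty)$ there are $0<l\le L$ with $l|r_1-r_2|\le|\sigma_i^{-1}(r_1)-\sigma_i^{-1}(r_2)|\le L|r_1-r_2|$ for all $r_1,r_2\in K$, $i\in\mathcal I$. *)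

From Stdlib Require Import Reals Lra List ClassicalDescription.
From Coquelicot Require Import Coquelicot.
Open Scope R_scope.

(** * Comparison functions on R_+ (functions R -> R, only values on [0,oo) matter) *)

Definition cont_on_Rplus (f : R -> R) : Prop :=
  forall x, 0 <= x -> forall eps, 0 < eps -> exists delta, 0 < delta /\
    forall y, 0 <= y -> Rabs (y - x) < delta -> Rabs (f y - f x) < eps.

Definition is_K (g : R -> R) : Prop :=
  cont_on_Rplus g /\ g 0 = 0 /\
  (forall x, 0 <= x -> 0 <= g x) /\
  (forall x y, 0 <= x -> x < y -> g x < g y).

Definition is_Kinf (g : R -> R) : Prop :=
  is_K g /\ (forall M, exists x, 0 <= x /\ M < g x).

Definition bounded_fam {I : Type} (s : I -> R) : Prop :=
  exists C, forall i, Rabs (s i) <= C.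

Definition in_linf_plus {I : Type} (s : I -> R) : Prop :=
  (forall i, 0 <= s i) /\ bounded_fam s.

(** sup-norm ||s|| = sup_i |s_i| (meaningful for bounded s, I nonempty) *)
Definition linf_norm {I : Type} (s : I -> R) : R :=
  real (Lub_Rbar (fun x => exists i, x = Rabs (s i))).

Definition vsub {I : Type} (s1 s2 : I -> R) : I -> R := fun i => s1 i - s2 i.

Definition vle {I : Type} (s1 s2 : I -> R) : Prop := forall i, s1 i <= s2 i.

Definition restr {I : Type} (J : list I) (s : I -> R) : I -> R :=
  fun k => if excluded_middle_informative (In k J) then s k else 0.

Definition zero_vec {I : Type} : I -> R := fun _ => 0.

Definition countable_nonempty (I : Type) : Prop :=
  inhabited I /\ exists f : I -> nat, forall x y, f x = f y -> x = y.

(** argument of mu_i: entries gamma_ij(s_j) at j in I_i, 0 elsewhere *)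
Definition gain_arg {I : Type} (Ii : I -> list I) (gam : I -> I -> R -> R)
  (i : I) (s : I -> R) : I -> R :=
  fun k => if excluded_middle_informative (In k (Ii i)) then gam i k (s k) else 0.

(** Gamma_i(s) := mu_i([gamma_ij(s_j)]_{j in I_i}) (real-valued by (M3)) *)
Definition Gamma {I : Type} (Ii : I -> list I) (gam : I -> I -> R -> R)
  (mu : I -> (I -> R) -> Rbar) (s : I -> R) : I -> R :=
  fun i => real (mu i (gain_arg Ii gam i s)).

Definition Gamma_rho {I : Type} (Ii : I -> list I) (gam : I -> I -> R -> R)
  (mu : I -> (I -> R) -> Rbar) (rho : R -> R) (s : I -> R) : I -> R :=
  fun i => Gamma Ii gam mu s i + rho (Gamma Ii gam mu s i).

Definition gain_operator_data {I : Type} (Ii : I -> list I)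
  (gam : I -> I -> R -> R) (mu : I -> (I -> R) -> Rbar) : Prop :=
  (* I_i is a finite subset of I \ {i} *)
  (forall i, ~ In i (Ii i)) /\
  (forall i j, In j (Ii i) -> is_Kinf (gam i j)) /\
  (forall r0, 0 <= r0 -> forall eps, 0 < eps -> exists delta, 0 < delta /\
     forall i j, In j (Ii i) -> forall r, 0 <= r -> Rabs (r - r0) <= delta ->
       Rabs (gam i j r - gam i j r0) <= eps) /\
  (forall i s, in_linf_plus s -> Rbar_le (Finite 0) (mu i s)) /\
  (exists xi, is_Kinf xi /\
     forall i, mu i zero_vec = Finite 0 /\
       forall s, in_linf_plus s -> Rbar_le (Finite (xi (linf_norm s))) (mu i s)) /\
  (forall i s1 s2, in_linf_plus s1 -> in_linf_plus s2 -> vle s1 s2 ->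
     Rbar_le (mu i s1) (mu i s2)) /\
  (forall (J : list I) i,
     let V := fun s => in_linf_plus s /\ forall k, ~ In k J -> s k = 0 in
     (forall s, V s -> is_finite (mu i s)) /\
     (forall s0, V s0 -> forall eps, 0 < eps -> exists delta, 0 < delta /\
        forall s, V s -> linf_norm (vsub s s0) < delta ->
          Rabs (real (mu i s) - real (mu i s0)) < eps)) /\
  (forall (A : (I -> R) -> Prop),
     (forall s, A s -> in_linf_plus s) ->
     (exists C, forall s, A s -> linf_norm s <= C) ->
     forall eps, 0 < eps -> exists delta, 0 < delta /\
       forall s0 s, A s0 -> in_linf_plus s -> linf_norm (vsub s s0) <= delta ->
         forall i, Rbar_le
           (Rbar_abs (Rbar_minus (mu i (restr (Ii i) s)) (mu i (restr (Ii i) s0))))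
           (Finite eps)) /\
  (forall s, in_linf_plus s -> in_linf_plus (Gamma Ii gam mu s)).

Definition path_of_strict_decay {I : Type} (Ii : I -> list I)
  (gam : I -> I -> R -> R) (mu : I -> (I -> R) -> Rbar) (sigma : R -> I -> R) : Prop :=
  (forall r, 0 <= r -> in_linf_plus (sigma r)) /\
  (exists rho, is_Kinf rho /\
     forall r, 0 <= r -> vle (Gamma_rho Ii gam mu rho (sigma r)) (sigma r)) /\
  (exists phimin phimax, is_Kinf phimin /\ is_Kinf phimax /\
     forall r, 0 <= r -> forall i, phimin r <= sigma r i <= phimax r) /\
  (forall i, is_Kinf (fun r => sigma r i)) /\
  (* (iv): sigma_i^{-1} bi-Lipschitz on compact K = [a,b] in (0,oo), uniformly in i;
     sigma_i^{-1}(r_k) = t_k is expressed by t_k >= 0 /\ sigma_i(t_k) = r_k *)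
  (forall a b, 0 < a -> a <= b -> exists l L, 0 < l /\ l <= L /\
     forall i r1 r2 t1 t2, a <= r1 <= b -> a <= r2 <= b ->
       0 <= t1 -> 0 <= t2 -> sigma t1 i = r1 -> sigma t2 i = r2 ->
       l * Rabs (r1 - r2) <= Rabs (t1 - t2) <= L * Rabs (r1 - r2)).

(* The path [sigma] is lowered in two steps, each by at most [margin rho sigma / 2],
   where [margin rho x <= min (rho (x/2)) (x/2) / 2] is a 1-Lipschitz K-function;
   such a loss only halves [rho] in the decay inequality.  First, the infimum of the
   cones [sigma t + slope t * (r - t)], whose slopes are locally bounded by uniform
   continuity of [sigma] on compact intervals, is locally Lipschitz uniformly in [i].
   Second, subtracting [margin rho x / (2 (1 + r))] makes it increase with slope
   bounded below on compact intervals, since [1 / (2 (1 + r))] decreases in [r].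
   Components squeezed between two K-functions and uniformly bi-Lipschitz on compact
   subintervals of (0, oo) satisfy (iii) and (iv). *)

From Stdlib Require Import Reals Lra List Classical ClassicalDescription.
From Coquelicot Require Import Coquelicot.
Open Scope R_scope.

Definition glb (E : R -> Prop) : R := real (Glb_Rbar E).

Lemma Glb_Rbar_finite E m y : E y -> (forall z, E z -> m <= z) ->
  Glb_Rbar E = Finite (glb E).
Proof.
  intros Ey Hm. unfold glb. destruct (Glb_Rbar_correct E) as [Hlb Hgreatest].
  assert (Hup : Rbar_le (Glb_Rbar E) y) by (apply Hlb; exact Ey).
  assert (Hlo : Rbar_le m (Glb_Rbar E)) by (apply Hgreatest; intros z Ez; apply Hm, Ez).
  destruct (Glb_Rbar E); simpl in *; tauto.
Qed.

Lemma glb_le E m y : (forall z, E z -> m <= z) -> E y -> glb E <= y.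
Proof.
  intros Hm Ey. pose proof (Glb_Rbar_finite E m y Ey Hm) as Hfin.
  pose proof (proj1 (Glb_Rbar_correct E) y Ey) as Hle. rewrite Hfin in Hle. exact Hle.
Qed.

Lemma glb_ge E m y : E y -> (forall z, E z -> m <= z) -> m <= glb E.
Proof.
  intros Ey Hm. pose proof (Glb_Rbar_finite E m y Ey Hm) as Hfin.
  assert (Hle : Rbar_le m (Glb_Rbar E)).
  { apply (proj2 (Glb_Rbar_correct E)). intros z Ez. apply Hm, Ez. }
  rewrite Hfin in Hle. exact Hle.
Qed.

(* [Glb_Rbar] of the empty set is [+oo], whose [real] part is [0]. *)
Lemma glb_empty E : (forall z, ~ E z) -> glb E = 0.
Proof.
  intros Hempty. unfold glb. replace (Glb_Rbar E) with p_infty; [reflexivity|].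
  symmetry. apply is_glb_Rbar_unique. split.
  - intros z Ez. destruct (Hempty z Ez).
  - intros [] _; simpl; tauto.
Qed.

Section ComparisonFunctions.

Variable g : R -> R.
Hypothesis g_K : is_K g.

Lemma K_zero : g 0 = 0.
Proof. apply g_K. Qed.

Lemma K_nonneg x : 0 <= x -> 0 <= g x.
Proof. apply g_K. Qed.

Lemma K_mono x y : 0 <= x -> x <= y -> g x <= g y.
Proof.
  intros Hx [Hxy|<-]; [|lra]. left. apply g_K; assumption.
Qed.

Lemma K_pos x : 0 < x -> 0 < g x.
Proof. intros Hx. rewrite <- K_zero. apply g_K; lra. Qed.

Lemma K_small_near_0 a : 0 < a -> exists d, 0 < d /\ forall y, 0 <= y -> y < d -> g y < a.
Proof.
  intros Ha. destruct (proj1 g_K 0 (Rle_refl 0) a Ha) as [d [Hd Hclose]].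
  exists d. split; [exact Hd|]. intros y Hy Hyd.
  specialize (Hclose y Hy). rewrite Rminus_0_r, Rabs_right, K_zero, Rminus_0_r in Hclose by lra.
  pose proof (Rle_abs (g y)). lra.
Qed.

End ComparisonFunctions.

Lemma Kinf_div g c : is_Kinf g -> 0 < c -> is_Kinf (fun x => g x / c).
Proof.
  intros [[Hcont [H0 [Hnn Hinc]]] Hunb] Hc. unfold Rdiv.
  assert (Hic : 0 < / c) by (apply Rinv_0_lt_compat, Hc).
  split; [split; [|split; [|split]]|].
  - intros x Hx eps Heps. destruct (Hcont x Hx (eps * c)) as [d [Hd Hclose]]; [nra|].
    exists d. split; [exact Hd|]. intros y Hy Hyx.
    rewrite <- Rmult_minus_distr_r, Rabs_mult, (Rabs_right (/ c)) by lra.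
    apply (Rmult_lt_reg_r c); [exact Hc|]. rewrite Rmult_assoc, Rinv_l by lra.
    rewrite Rmult_1_r. apply Hclose; assumption.
  - rewrite H0. ring.
  - intros x Hx. apply Rmult_le_pos; [apply Hnn, Hx|lra].
  - intros x y Hx Hxy. apply Rmult_lt_compat_r; [exact Hic|]. apply Hinc; assumption.
  - intros M. destruct (Hunb (M * c)) as [x [Hx HM]]. exists x. split; [exact Hx|].
    apply (Rmult_lt_reg_r c); [exact Hc|]. rewrite Rmult_assoc, Rinv_l by lra. lra.
Qed.

Lemma Rabs_le_linf_norm {I : Type} (s : I -> R) i : bounded_fam s -> Rabs (s i) <= linf_norm s.
Proof.
  intros [C HC]. unfold linf_norm.
  set (E := fun x => exists j, x = Rabs (s j)).
  destruct (Lub_Rbar_correct E) as [Hub Hleast].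
  assert (Hle : Rbar_le (Rabs (s i)) (Lub_Rbar E)) by (apply Hub; exists i; reflexivity).
  assert (Hfin : Rbar_le (Lub_Rbar E) C) by (apply Hleast; intros x [j ->]; apply HC).
  destruct (Lub_Rbar E); simpl in *; tauto.
Qed.

Lemma bounded_vsub {I : Type} (s1 s2 : I -> R) :
  bounded_fam s1 -> bounded_fam s2 -> bounded_fam (vsub s1 s2).
Proof.
  intros [C1 H1] [C2 H2]. exists (C1 + C2). intros i. unfold vsub, Rminus.
  pose proof (Rabs_triang (s1 i) (- s2 i)) as Htri. rewrite Rabs_Ropp in Htri.
  specialize (H1 i). specialize (H2 i). lra.
Qed.

Lemma bounded_finite_support {I : Type} (J : list I) (f : I -> R) :
  bounded_fam (fun k => if excluded_middle_informative (In k J) then f k else 0).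
Proof.
  exists (fold_right (fun k acc => Rabs (f k) + acc) 0 J).
  assert (Hpos : forall J', 0 <= fold_right (fun k acc => Rabs (f k) + acc) 0 J').
  { induction J' as [|j J' IH]; simpl; [lra|]. pose proof (Rabs_pos (f j)). lra. }
  intros k. destruct (excluded_middle_informative (In k J)) as [Hk|Hk].
  - induction J as [|j J IH]; simpl in *; [contradiction|].
    pose proof (Rabs_pos (f j)). pose proof (Hpos J).
    destruct Hk as [->|Hk]; [lra|]. pose proof (IH Hk). lra.
  - rewrite Rabs_R0. apply Hpos.
Qed.

Section LipschitzMinorant.

Variable f : R -> R.
Hypothesis f_nonneg : forall x, 0 <= x -> 0 <= f x.
Hypothesis f_mono : forall x y, 0 <= x -> x <= y -> f x <= f y.

Definition lip_minorant (x : R) : R :=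
  glb (fun y => exists z, 0 <= z <= x /\ y = f z + (x - z)).

Lemma lip_minorant_candidate_nonneg x y :
  (exists z, 0 <= z <= x /\ y = f z + (x - z)) -> 0 <= y.
Proof. intros [z [Hz ->]]. pose proof (f_nonneg z (proj1 Hz)). lra. Qed.

Lemma lip_minorant_le x z : 0 <= z <= x -> lip_minorant x <= f z + (x - z).
Proof.
  intros Hz. apply (glb_le _ 0); [apply lip_minorant_candidate_nonneg|]. exists z; auto.
Qed.

Lemma lip_minorant_le_fun x : 0 <= x -> lip_minorant x <= f x.
Proof.
  intros Hx. pose proof (lip_minorant_le x x (conj Hx (Rle_refl x))). lra.
Qed.

Lemma lip_minorant_ge x m : 0 <= x -> (forall z, 0 <= z <= x -> m <= f z + (x - z)) ->
  m <= lip_minorant x.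
Proof.
  intros Hx Hm. apply (glb_ge _ _ (f x + (x - x))).
  - exists x. split; [lra|reflexivity].
  - intros y [z [Hz ->]]. apply Hm, Hz.
Qed.

Lemma lip_minorant_nonneg x : 0 <= x -> 0 <= lip_minorant x.
Proof.
  intros Hx. apply lip_minorant_ge; [exact Hx|].
  intros z Hz. pose proof (f_nonneg z (proj1 Hz)). lra.
Qed.

Lemma lip_minorant_pos x : (forall z, 0 < z -> 0 < f z) -> 0 < x -> 0 < lip_minorant x.
Proof.
  intros f_pos Hx. apply Rlt_le_trans with (Rmin (f (x / 2)) (x / 2)).
  { pose proof (f_pos (x / 2)). apply Rmin_case; lra. }
  apply lip_minorant_ge; [lra|]. intros z Hz.
  pose proof (Rmin_l (f (x / 2)) (x / 2)). pose proof (Rmin_r (f (x / 2)) (x / 2)).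
  pose proof (f_nonneg z (proj1 Hz)).
  destruct (Rle_or_lt (x / 2) z) as [Hbig|Hsmall].
  - pose proof (f_mono (x / 2) z ltac:(lra) Hbig). lra.
  - lra.
Qed.

Lemma lip_minorant_mono x1 x2 : 0 <= x1 -> x1 <= x2 -> lip_minorant x1 <= lip_minorant x2.
Proof.
  intros Hx1 H12. apply lip_minorant_ge; [lra|]. intros z Hz.
  destruct (Rle_or_lt z x1) as [Hin|Hout].
  - pose proof (lip_minorant_le x1 z (conj (proj1 Hz) Hin)). lra.
  - pose proof (lip_minorant_le_fun x1 Hx1). pose proof (f_mono x1 z Hx1 (Rlt_le _ _ Hout)). lra.
Qed.

Lemma lip_minorant_lip x1 x2 : 0 <= x1 -> x1 <= x2 ->
  lip_minorant x2 <= lip_minorant x1 + (x2 - x1).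
Proof.
  intros Hx1 H12. cut (lip_minorant x2 - (x2 - x1) <= lip_minorant x1); [lra|].
  apply lip_minorant_ge; [exact Hx1|]. intros z Hz.
  pose proof (lip_minorant_le x2 z ltac:(lra)). lra.
Qed.

End LipschitzMinorant.

Definition margin (rho : R -> R) : R -> R :=
  lip_minorant (fun z => Rmin (rho (z / 2)) (z / 2) / 2).

Section Margin.

Variable rho : R -> R.
Hypothesis rho_K : is_K rho.

Lemma margin_base_nonneg z : 0 <= z -> 0 <= Rmin (rho (z / 2)) (z / 2) / 2.
Proof. intros Hz. pose proof (K_nonneg rho rho_K (z / 2)). apply Rmin_case; lra. Qed.

Lemma margin_base_mono z1 z2 : 0 <= z1 -> z1 <= z2 ->
  Rmin (rho (z1 / 2)) (z1 / 2) / 2 <= Rmin (rho (z2 / 2)) (z2 / 2) / 2.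
Proof.
  intros Hz1 H12. pose proof (K_mono rho rho_K (z1 / 2) (z2 / 2) ltac:(lra) ltac:(lra)).
  pose proof (Rmin_l (rho (z1 / 2)) (z1 / 2)). pose proof (Rmin_r (rho (z1 / 2)) (z1 / 2)).
  apply Rmult_le_compat_r; [lra|]. apply Rmin_glb; lra.
Qed.

Lemma margin_nonneg x : 0 <= x -> 0 <= margin rho x.
Proof. apply lip_minorant_nonneg, margin_base_nonneg. Qed.

Lemma margin_pos x : 0 < x -> 0 < margin rho x.
Proof.
  apply lip_minorant_pos; [apply margin_base_nonneg|apply margin_base_mono|].
  intros z Hz. pose proof (K_pos rho rho_K (z / 2)). apply Rmin_case; lra.
Qed.

Lemma margin_mono x1 x2 : 0 <= x1 -> x1 <= x2 -> margin rho x1 <= margin rho x2.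
Proof. apply lip_minorant_mono; [apply margin_base_nonneg|apply margin_base_mono]. Qed.

Lemma margin_lip x1 x2 : 0 <= x1 -> x1 <= x2 -> margin rho x2 <= margin rho x1 + (x2 - x1).
Proof. apply lip_minorant_lip, margin_base_nonneg. Qed.

Lemma margin_le_quarter x : 0 <= x -> margin rho x <= x / 4.
Proof.
  intros Hx. pose proof (lip_minorant_le_fun _ margin_base_nonneg x Hx). pose proof (Rmin_r (rho (x / 2)) (x / 2)).
  unfold margin. lra.
Qed.

Lemma margin_absorbs_decay x y : 0 <= y -> y + rho y <= x -> y + rho y / 2 <= x - margin rho x.
Proof.
  intros Hy Hdom. pose proof (K_nonneg rho rho_K y Hy) as Hry.
  assert (Hm : margin rho x <= Rmin (rho (x / 2)) (x / 2) / 2) by (apply (lip_minorant_le_fun _ margin_base_nonneg); lra).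
  pose proof (Rmin_l (rho (x / 2)) (x / 2)). pose proof (Rmin_r (rho (x / 2)) (x / 2)).
  destruct (Rle_or_lt (x / 2) y) as [Hbig|Hsmall].
  - pose proof (K_mono rho rho_K (x / 2) y ltac:(lra) Hbig). lra.
  - lra.
Qed.

Definition damp (r x : R) : R := x - margin rho x / (2 * (1 + r)).

Lemma damp_bounds r x : 0 <= r -> 0 <= x -> x - margin rho x / 2 <= damp r x <= x.
Proof.
  intros Hr Hx. unfold damp. pose proof (margin_nonneg x Hx) as Hm.
  assert (Hc : 0 < / (2 * (1 + r)) <= / 2).
  { split; [apply Rinv_0_lt_compat; lra|apply Rinv_le_contravar; lra]. }
  unfold Rdiv. split; nra.
Qed.

Lemma damp_increment r1 r2 b x1 x2 : 0 <= r1 -> r1 <= r2 -> r2 <= b -> 0 <= x1 -> x1 <= x2 ->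
  (r2 - r1) * margin rho x1 / (2 * (1 + b) ^ 2) <= damp r2 x2 - damp r1 x1
  <= (x2 - x1) + (r2 - r1) * x1.
Proof.
  intros Hr1 H12 H2b Hx1 Hx12. unfold damp.
  pose proof (margin_nonneg x1 Hx1). pose proof (margin_mono x1 x2 Hx1 Hx12).
  pose proof (margin_lip x1 x2 Hx1 Hx12). pose proof (margin_le_quarter x1 Hx1).
  set (m1 := margin rho x1) in *. set (m2 := margin rho x2) in *.
  assert (Hc2 : 0 < / (2 * (1 + r2)) <= / 2).
  { split; [apply Rinv_0_lt_compat; lra|apply Rinv_le_contravar; lra]. }
  assert (Hdiff : / (2 * (1 + r1)) - / (2 * (1 + r2)) = (r2 - r1) / (2 * (1 + r1) * (1 + r2)))
    by (field; lra).
  assert (Hdlo : (r2 - r1) / (2 * (1 + b) ^ 2) <= (r2 - r1) / (2 * (1 + r1) * (1 + r2))).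
  { apply Rmult_le_compat_l; [lra|]. apply Rinv_le_contravar; [nra|].
    assert ((1 + r1) * (1 + r2) <= (1 + b) * (1 + b)) by (apply Rmult_le_compat; lra).
    simpl. lra. }
  assert (Hdhi : (r2 - r1) / (2 * (1 + r1) * (1 + r2)) <= (r2 - r1) / 2).
  { apply Rmult_le_compat_l; [lra|]. apply Rinv_le_contravar; nra. }
  assert (Hexp : x2 - m2 / (2 * (1 + r2)) - (x1 - m1 / (2 * (1 + r1)))
    = (x2 - x1) - / (2 * (1 + r2)) * (m2 - m1) + (r2 - r1) / (2 * (1 + r1) * (1 + r2)) * m1).
  { rewrite <- Hdiff. unfold Rdiv. ring. }
  rewrite Hexp. unfold Rdiv in *. split; nra.
Qed.

End Margin.

Section GainOperator.

Variables (I : Type) (Ii : I -> list I) (gam : I -> I -> R -> R) (mu : I -> (I -> R) -> Rbar).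
Hypothesis gain_data : gain_operator_data Ii gam mu.

Lemma gain_arg_in_linf_plus i s : in_linf_plus s -> in_linf_plus (gain_arg Ii gam i s).
Proof.
  intros [Hs _]. destruct gain_data as [_ [Hgam _]]. split.
  - intros k. unfold gain_arg. destruct (excluded_middle_informative (In k (Ii i))) as [Hk|_].
    + apply (K_nonneg _ (proj1 (Hgam i k Hk))), Hs.
    + lra.
  - apply (bounded_finite_support (Ii i) (fun k => gam i k (s k))).
Qed.

Lemma Gamma_nonneg s i : in_linf_plus s -> 0 <= Gamma Ii gam mu s i.
Proof.
  intros Hs. destruct gain_data as [_ [_ [_ [_ [_ [_ [_ [_ HGamma]]]]]]]].
  apply (proj1 (HGamma s Hs)).
Qed.

Lemma Gamma_mono s1 s2 i : in_linf_plus s1 -> in_linf_plus s2 -> vle s1 s2 ->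
  Gamma Ii gam mu s1 i <= Gamma Ii gam mu s2 i.
Proof.
  intros Hs1 Hs2 H12. destruct gain_data as [_ [Hgam [_ [_ [_ [HM2 [HM3 _]]]]]]].
  assert (Hfin : forall s, in_linf_plus s -> is_finite (mu i (gain_arg Ii gam i s))).
  { intros s Hs. apply (proj1 (HM3 (Ii i) i)). split; [apply gain_arg_in_linf_plus, Hs|].
    intros k Hk. unfold gain_arg. destruct (excluded_middle_informative (In k (Ii i))); tauto. }
  assert (Hle : Rbar_le (mu i (gain_arg Ii gam i s1)) (mu i (gain_arg Ii gam i s2))).
  { apply HM2; [apply gain_arg_in_linf_plus, Hs1|apply gain_arg_in_linf_plus, Hs2|].
    intros k. unfold gain_arg. destruct (excluded_middle_informative (In k (Ii i))) as [Hk|_].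
    - apply (K_mono _ (proj1 (Hgam i k Hk))); [apply (proj1 Hs1)|apply H12].
    - lra. }
  unfold Gamma. rewrite <- (Hfin s1 Hs1), <- (Hfin s2 Hs2) in Hle. exact Hle.
Qed.

Lemma Gamma_rho_decay_below rho s s' : is_K rho ->
  in_linf_plus s -> in_linf_plus s' -> vle s' s ->
  (forall i, s i - margin rho (s i) <= s' i) ->
  vle (Gamma_rho Ii gam mu rho s) s ->
  vle (Gamma_rho Ii gam mu (fun x => rho x / 2) s') s'.
Proof.
  intros Hrho Hs Hs' Hle Hmargin Hdecay i. unfold Gamma_rho in *.
  pose proof (Gamma_nonneg s' i Hs') as Hy.
  pose proof (Gamma_mono s' s i Hs' Hs Hle) as HyY.
  pose proof (margin_absorbs_decay rho Hrho (s i) (Gamma Ii gam mu s i)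
    ltac:(lra) (Hdecay i)) as Habsorb.
  pose proof (K_mono rho Hrho _ _ Hy HyY). pose proof (Hmargin i). lra.
Qed.

End GainOperator.

Section LocallyBilipschitzFamily.

Variables (I : Type) (g : R -> I -> R) (lo hi : R -> R).
Hypothesis lo_Kinf : is_Kinf lo.
Hypothesis hi_K : is_K hi.
Hypothesis g_bounds : forall r i, 0 <= r -> lo r <= g r i <= hi r.
Hypothesis g_bilip : forall a b, 0 < a -> a <= b -> exists k K, 0 < k <= K /\
  forall i t1 t2, a <= t1 -> t1 <= t2 -> t2 <= b ->
    k * (t2 - t1) <= g t2 i - g t1 i <= K * (t2 - t1).

Lemma family_zero i : g 0 i = 0.
Proof.
  pose proof (g_bounds 0 i (Rle_refl 0)).
  rewrite (K_zero lo (proj1 lo_Kinf)), (K_zero hi hi_K) in *. lra.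
Qed.

Lemma family_abs_bilip a b : 0 < a -> a <= b -> exists k K, 0 < k <= K /\
  forall i t1 t2, a <= t1 <= b -> a <= t2 <= b ->
    k * Rabs (t1 - t2) <= Rabs (g t1 i - g t2 i) <= K * Rabs (t1 - t2).
Proof.
  intros Ha Hab. destruct (g_bilip a b Ha Hab) as [k [K [HkK Hslope]]].
  exists k, K. split; [exact HkK|]. intros i t1 t2 Ht1 Ht2.
  destruct (Rle_or_lt t1 t2) as [H12|H21].
  - pose proof (Hslope i t1 t2 (proj1 Ht1) H12 (proj2 Ht2)).
    rewrite (Rabs_minus_sym t1), (Rabs_minus_sym (g t1 i)), !Rabs_right by nra. lra.
  - pose proof (Hslope i t2 t1 (proj1 Ht2) (Rlt_le _ _ H21) (proj2 Ht1)).
    rewrite !Rabs_right by nra. lra.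
Qed.

Lemma family_strict i x y : 0 <= x -> x < y -> g x i < g y i.
Proof.
  intros [Hx|<-] Hxy.
  - destruct (g_bilip x y Hx (Rlt_le _ _ Hxy)) as [k [K [HkK Hslope]]].
    pose proof (Hslope i x y (Rle_refl x) (Rlt_le _ _ Hxy) (Rle_refl y)). nra.
  - rewrite family_zero. pose proof (g_bounds y i ltac:(lra)).
    pose proof (K_pos lo (proj1 lo_Kinf) y Hxy). lra.
Qed.

Lemma family_Kinf i : is_Kinf (fun r => g r i).
Proof.
  split; [split; [|split; [|split]]|].
  - intros x [Hx|<-] eps Heps.
    + destruct (family_abs_bilip (x / 2) (2 * x) ltac:(lra) ltac:(lra)) as [k [K [HkK Habs]]].
      exists (Rmin (x / 2) (eps / (K + 1))). split.
      { apply Rmin_case; [lra|apply Rdiv_lt_0_compat; lra]. }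
      intros y Hy Hyx. pose proof (Rmin_l (x / 2) (eps / (K + 1))).
      pose proof (Rmin_r (x / 2) (eps / (K + 1))).
      assert (Hyx' : Rabs (y - x) <= x / 2) by lra. apply Rabs_le_between' in Hyx'.
      pose proof (proj2 (Habs i y x ltac:(lra) ltac:(lra))) as Hlip.
      assert (Hsmall : (K + 1) * Rabs (y - x) < eps).
      { apply (Rmult_lt_reg_r (/ (K + 1))); [apply Rinv_0_lt_compat; lra|].
        replace ((K + 1) * Rabs (y - x) * / (K + 1)) with (Rabs (y - x)) by (field; lra).
        exact (Rlt_le_trans _ _ _ Hyx (Rmin_r _ _)). }
      pose proof (Rabs_pos (y - x)). nra.
    + destruct (K_small_near_0 hi hi_K eps Heps) as [d [Hd Hsmall]].
      exists d. split; [exact Hd|]. intros y Hy Hyd.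
      rewrite Rminus_0_r, Rabs_right in Hyd by lra.
      pose proof (g_bounds y i Hy). pose proof (K_nonneg lo (proj1 lo_Kinf) y Hy).
      pose proof (Hsmall y Hy Hyd). rewrite family_zero, Rminus_0_r, Rabs_right; lra.
  - apply family_zero.
  - intros x Hx. pose proof (g_bounds x i Hx). pose proof (K_nonneg lo (proj1 lo_Kinf) x Hx). lra.
  - intros x y Hx Hxy. apply family_strict; assumption.
  - intros M. destruct (proj2 lo_Kinf M) as [x [Hx HM]]. exists x. split; [exact Hx|].
    pose proof (g_bounds x i Hx). lra.
Qed.

Lemma family_inverse_bilip a b : 0 < a -> a <= b -> exists l L, 0 < l /\ l <= L /\
  forall i r1 r2 t1 t2, a <= r1 <= b -> a <= r2 <= b ->
    0 <= t1 -> 0 <= t2 -> g t1 i = r1 -> g t2 i = r2 ->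
    l * Rabs (r1 - r2) <= Rabs (t1 - t2) <= L * Rabs (r1 - r2).
Proof.
  intros Ha Hab. destruct (K_small_near_0 hi hi_K a Ha) as [d [Hd Hsmall]].
  destruct (proj2 lo_Kinf b) as [T [HT Hlarge]].
  set (T' := Rmax T d).
  assert (Hrange : forall i t, 0 <= t -> a <= g t i <= b -> d <= t <= T').
  { intros i t Ht Hgt. pose proof (g_bounds t i Ht). split.
    - apply Rnot_lt_le. intros Htd. pose proof (Hsmall t Ht Htd). lra.
    - apply Rle_trans with T; [|apply Rmax_l]. apply Rnot_lt_le. intros HTt.
      pose proof (K_mono lo (proj1 lo_Kinf) T t HT (Rlt_le _ _ HTt)). lra. }
  destruct (family_abs_bilip d T' Hd (Rmax_r T d)) as [k [K [HkK Habs]]].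
  exists (/ K), (/ k). split; [apply Rinv_0_lt_compat; lra|].
  split; [apply Rinv_le_contravar; lra|].
  intros i r1 r2 t1 t2 Hr1 Hr2 Ht1 Ht2 <- <-.
  pose proof (Habs i t1 t2 (Hrange i t1 Ht1 Hr1) (Hrange i t2 Ht2 Hr2)) as [Hlo Hhi].
  set (dt := Rabs (t1 - t2)) in *. set (dg := Rabs (g t1 i - g t2 i)) in *.
  split.
  - apply (Rmult_le_reg_l K); [lra|]. rewrite <- Rmult_assoc, Rinv_r, Rmult_1_l by lra. exact Hhi.
  - apply (Rmult_le_reg_l k); [lra|]. rewrite <- Rmult_assoc, Rinv_r, Rmult_1_l by lra. exact Hlo.
Qed.

End LocallyBilipschitzFamily.

Section StrictPath.

Variables (I : Type) (sigma : R -> I -> R) (rho phimin phimax : R -> R).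
Hypothesis rho_Kinf : is_Kinf rho.
Hypothesis phimin_Kinf : is_Kinf phimin.
Hypothesis phimax_Kinf : is_Kinf phimax.
Hypothesis sigma_linf : forall r, 0 <= r -> in_linf_plus (sigma r).
Hypothesis sigma_cont : forall r0, 0 <= r0 -> forall eps, 0 < eps -> exists delta, 0 < delta /\
  forall r, 0 <= r -> Rabs (r - r0) < delta -> linf_norm (vsub (sigma r) (sigma r0)) < eps.
Hypothesis sigma_mono : forall r1 r2, 0 <= r1 -> r1 <= r2 -> vle (sigma r1) (sigma r2).
Hypothesis sigma_bounds : forall r, 0 <= r -> forall i, phimin r <= sigma r i <= phimax r.

Let rho_K : is_K rho := proj1 rho_Kinf.
Let phimax_K : is_K phimax := proj1 phimax_Kinf.

Lemma sigma_nonneg r i : 0 <= r -> 0 <= sigma r i.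
Proof. intros Hr. apply (proj1 (sigma_linf r Hr)). Qed.

Lemma sigma_le_phimax r b i : 0 <= r -> r <= b -> sigma r i <= phimax b.
Proof.
  intros Hr Hrb. pose proof (sigma_bounds r Hr i). pose proof (K_mono phimax phimax_K r b Hr Hrb).
  lra.
Qed.

Lemma sigma_zero i : sigma 0 i = 0.
Proof.
  pose proof (sigma_bounds 0 (Rle_refl 0) i) as Hb.
  rewrite (K_zero _ (proj1 phimin_Kinf)), (K_zero _ phimax_K) in Hb. lra.
Qed.

Lemma sigma_unif_cont a b eps : 0 < a -> 0 < eps -> exists d, 0 < d /\
  forall i t r, a <= t -> t <= r -> r <= b -> r - t <= d -> sigma r i - sigma t i < eps.
Proof.
  intros Ha Heps.
  assert (Hcont : forall x, a <= x <= b ->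
    @continuous R_UniformSpace (fct_UniformSpace I R_UniformSpace) sigma x).
  { intros x Hx. apply filterlim_locally. intros e.
    destruct (sigma_cont x ltac:(lra) e (cond_pos e)) as [d [Hd Hclose]].
    assert (Hpos : 0 < Rmin d x) by (apply Rmin_case; lra).
    exists (mkposreal _ Hpos). intros y Hy i. change (Rabs (y - x) < Rmin d x) in Hy.
    pose proof (Rmin_l d x). pose proof (Rmin_r d x). apply Rabs_lt_between' in Hy.
    change (Rabs (sigma y i - sigma x i) < e).
    apply (Rle_lt_trans _ (linf_norm (vsub (sigma y) (sigma x)))).
    - apply (Rabs_le_linf_norm (vsub (sigma y) (sigma x)) i).
      apply bounded_vsub; apply sigma_linf; lra.
    - apply Hclose; [lra|]. apply Rabs_lt_between'. lra. }
  destruct (unifcont_1d sigma a b Hcont (mkposreal _ Heps)) as [[d Hd] Hunif].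
  exists (d / 2). split; [lra|]. intros i t r Ht Htr Hrb Hrt.
  assert (Hball : ball (M := fct_UniformSpace I R_UniformSpace) (sigma t) eps (sigma r)).
  { apply NNPP, Hunif; simpl; [lra|lra|]. change (Rabs (r - t) < d). rewrite Rabs_right; lra. }
  specialize (Hball i). change (Rabs (sigma r i - sigma t i) < eps) in Hball.
  pose proof (Rle_abs (sigma r i - sigma t i)). lra.
Qed.

Definition slack (t : R) : R := margin rho (phimin t) / 2.

Lemma slack_nonneg t : 0 <= t -> 0 <= slack t.
Proof.
  intros Ht. unfold slack. pose proof (margin_nonneg rho rho_K (phimin t)
    (K_nonneg _ (proj1 phimin_Kinf) t Ht)). lra.
Qed.

Lemma slack_le_margin r i : 0 <= r -> slack r <= margin rho (sigma r i) / 2.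
Proof.
  intros Hr. unfold slack. pose proof (margin_mono rho rho_K (phimin r) (sigma r i)
    (K_nonneg _ (proj1 phimin_Kinf) r Hr) (proj1 (sigma_bounds r Hr i))). lra.
Qed.

(* The factor [2 * phimax (t + 2)] makes candidates with [r - t >= 1/2] useless in [sigma_reg]. *)
Definition admissible_slope (t L : R) : Prop :=
  2 * phimax (t + 2) <= L /\
  forall i r, t <= r <= t + 1 -> sigma r i - sigma t i <= slack t + L * (r - t).

Lemma admissible_slope_uniform a b : 0 < a -> a <= b ->
  exists M, forall t, a <= t <= b -> admissible_slope t M.
Proof.
  intros Ha Hab.
  assert (Hslack : 0 < slack a).
  { unfold slack. pose proof (margin_pos rho rho_K (phimin a)
      (K_pos _ (proj1 phimin_Kinf) a Ha)). lra. }
  destruct (sigma_unif_cont a (b + 1) (slack a) Ha Hslack) as [d [Hd Hunif]].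
  set (d' := Rmin d 1). assert (Hd' : 0 < d' <= d) by (split; [apply Rmin_case|apply Rmin_l]; lra).
  pose proof (K_nonneg phimax phimax_K (b + 1) ltac:(lra)).
  assert (Hfar : 0 <= phimax (b + 1) / d') by (apply Rle_mult_inv_pos; lra).
  exists (2 * phimax (b + 2) + phimax (b + 1) / d'). intros t Ht. split.
  - pose proof (K_mono phimax phimax_K (t + 2) (b + 2) ltac:(lra) ltac:(lra)). lra.
  - intros i r Hr. pose proof (K_nonneg phimax phimax_K (b + 2) ltac:(lra)).
    pose proof (slack_nonneg t ltac:(lra)).
    destruct (Rle_or_lt (r - t) d') as [Hnear|Hfar'].
    + pose proof (Hunif i t r (proj1 Ht) (proj1 Hr) ltac:(lra) ltac:(lra)).
      unfold slack in *. pose proof (margin_mono rho rho_K (phimin a) (phimin t)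
        (K_nonneg _ (proj1 phimin_Kinf) a ltac:(lra))
        (K_mono _ (proj1 phimin_Kinf) a t ltac:(lra) (proj1 Ht))).
      nra.
    + pose proof (sigma_le_phimax r (b + 1) i ltac:(lra) ltac:(lra)).
      pose proof (sigma_nonneg t i ltac:(lra)).
      assert (phimax (b + 1) <= phimax (b + 1) / d' * (r - t)).
      { unfold Rdiv. rewrite Rmult_assoc. rewrite <- (Rmult_1_r (phimax (b + 1))) at 1.
        apply Rmult_le_compat_l; [lra|]. apply (Rmult_le_reg_l d'); [lra|].
        rewrite <- Rmult_assoc, Rinv_r; lra. }
      nra.
Qed.

Definition slope (t : R) : R := glb (admissible_slope t).

Lemma admissible_slope_nonneg t L : 0 <= t -> admissible_slope t L -> 0 <= L.
Proof. intros Ht [HL _]. pose proof (K_nonneg phimax phimax_K (t + 2) ltac:(lra)). lra. Qed.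

Lemma slope_le t M : 0 <= t -> admissible_slope t M -> slope t <= M.
Proof. intros Ht HM. apply (glb_le _ 0); [intros L; apply admissible_slope_nonneg, Ht|exact HM]. Qed.

(* The admissibility conditions are closed, so the infimum is attained. *)
Lemma slope_admissible t : 0 < t -> admissible_slope t (slope t).
Proof.
  intros Ht. destruct (admissible_slope_uniform t t Ht (Rle_refl t)) as [M HM].
  specialize (HM t (conj (Rle_refl t) (Rle_refl t))).
  split.
  - apply (glb_ge _ _ M HM). intros L [HL _]. exact HL.
  - intros i r [[Htr|<-] Hr].
    + cut ((sigma r i - sigma t i - slack t) / (r - t) <= slope t).
      { intros Hq. apply (Rmult_le_compat_r (r - t)) in Hq; [|lra].
        unfold Rdiv in Hq. rewrite Rmult_assoc, Rinv_l in Hq by lra. lra. }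
      apply (glb_ge _ _ M HM). intros L [_ HL]. specialize (HL i r (conj (Rlt_le _ _ Htr) Hr)).
      apply (Rmult_le_reg_r (r - t)); [lra|]. unfold Rdiv. rewrite Rmult_assoc, Rinv_l by lra. lra.
    + pose proof (slack_nonneg t ltac:(lra)). rewrite !Rminus_diag. lra.
Qed.

Lemma slope_nonneg t : 0 < t -> 0 <= slope t.
Proof. intros Ht. apply (admissible_slope_nonneg t); [lra|apply slope_admissible, Ht]. Qed.

Definition reg_candidate (r : R) (i : I) (y : R) : Prop :=
  exists t, 0 < t <= r /\ r < t + 1 /\ y = sigma t i + slope t * (r - t).

Definition sigma_reg (r : R) (i : I) : R := glb (reg_candidate r i).

Lemma reg_candidate_nonneg r i y : reg_candidate r i y -> 0 <= y.
Proof.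
  intros [t [Ht [_ ->]]]. pose proof (sigma_nonneg t i ltac:(lra)).
  pose proof (slope_nonneg t (proj1 Ht)). nra.
Qed.

Lemma reg_candidate_self r i : 0 < r -> reg_candidate r i (sigma r i).
Proof. intros Hr. exists r. split; [lra|split; [lra|ring]]. Qed.

Lemma sigma_reg_le_candidate r i y : reg_candidate r i y -> sigma_reg r i <= y.
Proof. apply glb_le with 0, reg_candidate_nonneg. Qed.

(* At [r = 0] there are no candidates and [glb] returns [0]. *)
Lemma sigma_reg_zero i : sigma_reg 0 i = 0.
Proof. apply glb_empty. intros y [t [Ht _]]. lra. Qed.

Lemma sigma_reg_le r i : 0 <= r -> sigma_reg r i <= sigma r i.
Proof.
  intros [Hr|<-].
  - apply sigma_reg_le_candidate, reg_candidate_self, Hr.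
  - rewrite sigma_reg_zero, sigma_zero. lra.
Qed.

Lemma sigma_reg_ge r i : 0 <= r -> sigma r i - margin rho (sigma r i) / 2 <= sigma_reg r i.
Proof.
  intros [Hr|<-].
  2:{ rewrite sigma_reg_zero, sigma_zero. pose proof (margin_nonneg rho rho_K 0 (Rle_refl 0)). lra. }
  apply (glb_ge _ _ _ (reg_candidate_self r i Hr)). intros y [t [Ht [Hrt ->]]].
  pose proof (proj2 (slope_admissible t (proj1 Ht)) i r ltac:(lra)).
  pose proof (slack_le_margin t i ltac:(lra)).
  pose proof (margin_mono rho rho_K (sigma t i) (sigma r i) (sigma_nonneg t i ltac:(lra))
    (sigma_mono t r ltac:(lra) (proj2 Ht) i)).
  lra.
Qed.

Lemma sigma_reg_nonneg r i : 0 <= r -> 0 <= sigma_reg r i.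
Proof.
  intros [Hr|<-].
  - apply (glb_ge _ _ _ (reg_candidate_self r i Hr)), reg_candidate_nonneg.
  - rewrite sigma_reg_zero. lra.
Qed.

Lemma sigma_reg_mono r1 r2 i : 0 <= r1 -> r1 <= r2 -> sigma_reg r1 i <= sigma_reg r2 i.
Proof.
  intros [Hr1|<-] H12.
  2:{ rewrite sigma_reg_zero. apply sigma_reg_nonneg, H12. }
  apply (glb_ge _ _ _ (reg_candidate_self r2 i ltac:(lra))). intros y [t [Ht [Hrt ->]]].
  pose proof (slope_nonneg t (proj1 Ht)).
  destruct (Rle_or_lt t r1) as [Htr1|Hr1t].
  - apply Rle_trans with (sigma t i + slope t * (r1 - t)); [|nra].
    apply sigma_reg_le_candidate. exists t. split; [lra|split; [lra|reflexivity]].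
  - pose proof (sigma_reg_le r1 i ltac:(lra)).
    pose proof (sigma_mono r1 t ltac:(lra) (Rlt_le _ _ Hr1t) i). nra.
Qed.

Lemma small_candidate_slope_bound a b : 0 < a -> a <= b -> exists K, 0 <= K /\
  forall i t r1 r2, 0 < t <= r1 -> r1 < t + 1 -> a <= r1 -> r1 <= r2 -> r2 <= b ->
    r2 - r1 < 1 / 2 -> slope t * (r1 - t) < sigma r2 i ->
    r1 - t < 1 / 2 /\ slope t <= K.
Proof.
  intros Ha Hab. destruct (admissible_slope_uniform (a / 2) b ltac:(lra) ltac:(lra)) as [M HM].
  pose proof (K_nonneg phimax phimax_K b ltac:(lra)).
  assert (HM0 : 0 <= M) by (apply (admissible_slope_nonneg b); [lra|apply HM; lra]).
  assert (Hfar : 0 <= 2 * phimax b / a) by (apply Rle_mult_inv_pos; lra).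
  exists (M + 2 * phimax b / a). split; [lra|].
  intros i t r1 r2 Ht Hwin Ha1 H12 H2b Hclose Huseful.
  pose proof (slope_admissible t (proj1 Ht)) as [Hsteep _].
  pose proof (slope_nonneg t (proj1 Ht)).
  pose proof (sigma_le_phimax r2 (t + 2) i ltac:(lra) ltac:(lra)).
  pose proof (sigma_le_phimax r2 b i ltac:(lra) H2b).
  assert (Hnear : r1 - t < 1 / 2) by (apply Rnot_le_lt; intros Hfar'; nra).
  split; [exact Hnear|].
  destruct (Rle_or_lt (a / 2) t) as [Hta|Hta].
  - pose proof (slope_le t M ltac:(lra) (HM t ltac:(lra))). lra.
  - assert (slope t * (a / 2) <= phimax b) by nra.
    assert (slope t <= 2 * phimax b / a).
    { apply (Rmult_le_reg_r (a / 2)); [lra|]. unfold Rdiv. field_simplify; lra. }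
    lra.
Qed.

Lemma sigma_reg_lip a b : 0 < a -> a <= b -> exists K, 0 <= K /\
  forall i r1 r2, a <= r1 -> r1 <= r2 -> r2 <= b -> sigma_reg r2 i - sigma_reg r1 i <= K * (r2 - r1).
Proof.
  intros Ha Hab. destruct (small_candidate_slope_bound a b Ha Hab) as [K [HK Huseful]].
  pose proof (K_nonneg phimax phimax_K b ltac:(lra)).
  exists (K + 2 * phimax b). split; [lra|]. intros i r1 r2 H1 H12 H2.
  pose proof (sigma_reg_le r2 i ltac:(lra)). pose proof (sigma_le_phimax r2 b i ltac:(lra) H2).
  cut (sigma_reg r2 i - (K + 2 * phimax b) * (r2 - r1) <= sigma_reg r1 i); [lra|].
  apply (glb_ge _ _ _ (reg_candidate_self r1 i ltac:(lra))). intros y [t [Ht [Hwin ->]]].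
  pose proof (sigma_nonneg t i ltac:(lra)). pose proof (slope_nonneg t (proj1 Ht)).
  destruct (Rle_or_lt (1 / 2) (r2 - r1)) as [Hfar|Hclose]; [nra|].
  destruct (Rle_or_lt (sigma r2 i) (slope t * (r1 - t))) as [Hsteep|Hflat]; [nra|].
  destruct (Huseful i t r1 r2 Ht Hwin H1 H12 H2 Hclose Hflat) as [Hnear HslopeK].
  assert (sigma_reg r2 i <= sigma t i + slope t * (r2 - t)).
  { apply sigma_reg_le_candidate. exists t. split; [lra|split; [lra|reflexivity]]. }
  nra.
Qed.

Definition strict_path (r : R) (i : I) : R := damp rho r (sigma_reg r i).

Lemma strict_path_between r i : 0 <= r ->
  sigma r i - margin rho (sigma r i) <= strict_path r i <= sigma r i.
Proof.
  intros Hr. unfold strict_path.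
  pose proof (sigma_reg_nonneg r i Hr). pose proof (sigma_reg_le r i Hr).
  pose proof (sigma_reg_ge r i Hr). pose proof (damp_bounds rho rho_K r (sigma_reg r i) Hr ltac:(lra)).
  pose proof (margin_mono rho rho_K (sigma_reg r i) (sigma r i) ltac:(lra) ltac:(lra)). lra.
Qed.

Lemma strict_path_bounds r i : 0 <= r -> phimin r / 2 <= strict_path r i <= phimax r.
Proof.
  intros Hr. pose proof (strict_path_between r i Hr). pose proof (sigma_bounds r Hr i).
  pose proof (margin_le_quarter rho rho_K (sigma r i) (sigma_nonneg r i Hr)).
  pose proof (K_nonneg _ (proj1 phimin_Kinf) r Hr). lra.
Qed.

Lemma strict_path_linf r : 0 <= r -> in_linf_plus (strict_path r).
Proof.
  intros Hr. destruct (proj2 (sigma_linf r Hr)) as [C HC]. split.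
  - intros i. pose proof (strict_path_bounds r i Hr). pose proof (K_nonneg _ (proj1 phimin_Kinf) r Hr).
    lra.
  - exists C. intros i. pose proof (strict_path_bounds r i Hr). pose proof (strict_path_between r i Hr).
    pose proof (K_nonneg _ (proj1 phimin_Kinf) r Hr). specialize (HC i).
    rewrite Rabs_right in HC by (apply Rle_ge, sigma_nonneg, Hr). rewrite Rabs_right; lra.
Qed.

Lemma strict_path_bilip a b : 0 < a -> a <= b -> exists k K, 0 < k <= K /\
  forall i r1 r2, a <= r1 -> r1 <= r2 -> r2 <= b ->
    k * (r2 - r1) <= strict_path r2 i - strict_path r1 i <= K * (r2 - r1).
Proof.
  intros Ha Hab. destruct (sigma_reg_lip a b Ha Hab) as [Kw [HKw Hlip]].
  set (m := margin rho (7 / 8 * phimin a)).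
  assert (Hm : 0 < m).
  { apply (margin_pos rho rho_K). pose proof (K_pos _ (proj1 phimin_Kinf) a Ha). lra. }
  set (k := m / (2 * (1 + b) ^ 2)).
  assert (Hk : 0 < k) by (apply Rdiv_lt_0_compat; [lra|]; simpl; nra).
  exists k, (Rmax k (Kw + phimax b)). split; [split; [lra|apply Rmax_l]|].
  intros i r1 r2 H1 H12 H2. unfold strict_path.
  pose proof (sigma_reg_nonneg r1 i ltac:(lra)) as Hw1.
  pose proof (damp_increment rho rho_K r1 r2 b _ _ ltac:(lra) H12 H2 Hw1
    (sigma_reg_mono r1 r2 i ltac:(lra) H12)) as [Hlo Hhi].
  split.
  - assert (Hmw : m <= margin rho (sigma_reg r1 i)).
    { apply (margin_mono rho rho_K); [pose proof (K_nonneg _ (proj1 phimin_Kinf) a); lra|].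
      pose proof (sigma_reg_ge r1 i ltac:(lra)). pose proof (sigma_bounds r1 ltac:(lra) i).
      pose proof (margin_le_quarter rho rho_K (sigma r1 i) (sigma_nonneg r1 i ltac:(lra))).
      pose proof (K_mono _ (proj1 phimin_Kinf) a r1 ltac:(lra) H1). lra. }
    eapply Rle_trans; [|exact Hlo].
    replace (k * (r2 - r1)) with ((r2 - r1) * m / (2 * (1 + b) ^ 2)) by (unfold k; field; simpl; nra).
    apply Rmult_le_compat_r; [left; apply Rinv_0_lt_compat; simpl; nra|].
    apply Rmult_le_compat_l; lra.
  - pose proof (Hlip i r1 r2 H1 H12 H2).
    pose proof (sigma_reg_le r1 i ltac:(lra)). pose proof (sigma_le_phimax r1 b i ltac:(lra) ltac:(lra)).
    pose proof (Rmax_r k (Kw + phimax b)). nra.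
Qed.

Variables (Ii : I -> list I) (gam : I -> I -> R -> R) (mu : I -> (I -> R) -> Rbar).
Hypothesis gain_data : gain_operator_data Ii gam mu.
Hypothesis sigma_decay : forall r, 0 <= r -> vle (Gamma_rho Ii gam mu rho (sigma r)) (sigma r).

Lemma strict_path_of_strict_decay : path_of_strict_decay Ii gam mu strict_path.
Proof.
  assert (Hlo : is_Kinf (fun r => phimin r / 2)) by (apply Kinf_div; [exact phimin_Kinf|lra]).
  split; [exact strict_path_linf|split; [|split; [|split]]].
  - exists (fun x => rho x / 2). split; [apply Kinf_div; [exact rho_Kinf|lra]|].
    intros r Hr. apply (Gamma_rho_decay_below I Ii gam mu gain_data rho (sigma r) (strict_path r)
      rho_K (sigma_linf r Hr) (strict_path_linf r Hr)); [| |apply sigma_decay, Hr];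
      intros i; apply strict_path_between, Hr.
  - exists (fun r => phimin r / 2), phimax. do 2 (split; [assumption|]).
    intros r Hr i. apply strict_path_bounds, Hr.
  - intros i. exact (family_Kinf I strict_path _ phimax Hlo phimax_K strict_path_bounds
      strict_path_bilip i).
  - exact (family_inverse_bilip I strict_path _ phimax Hlo phimax_K strict_path_bounds
      strict_path_bilip).
Qed.

End StrictPath.

Theorem proposition2p9 :
  forall (I : Type) (Ii : I -> list I) (gam : I -> I -> R -> R)
    (mu : I -> (I -> R) -> Rbar),
  countable_nonempty I ->
  gain_operator_data Ii gam mu ->
  forall sigma : R -> I -> R,
    (forall r, 0 <= r -> in_linf_plus (sigma r)) ->
    (* continuous in norm on R_+ *)
    (forall r0, 0 <= r0 -> forall eps, 0 < eps -> exists delta, 0 < delta /\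
       forall r, 0 <= r -> Rabs (r - r0) < delta ->
         linf_norm (vsub (sigma r) (sigma r0)) < eps) ->
    (* increasing *)
    (forall r1 r2, 0 <= r1 -> r1 <= r2 -> vle (sigma r1) (sigma r2)) ->
    (* (i) *)
    (exists rho, is_Kinf rho /\
       forall r, 0 <= r -> vle (Gamma_rho Ii gam mu rho (sigma r)) (sigma r)) ->
    (* (ii) *)
    (exists phimin phimax, is_Kinf phimin /\ is_Kinf phimax /\
       forall r, 0 <= r -> forall i, phimin r <= sigma r i <= phimax r) ->
    exists sigma' : R -> I -> R, path_of_strict_decay Ii gam mu sigma'.
Proof.
  intros I Ii gam mu _ Hgain sigma Hlinf Hcont Hmono [rho [Hrho Hdecay]]
    [phimin [phimax [Hmin [Hmax Hbounds]]]].
  exists (strict_path I sigma rho phimin phimax).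
  exact (strict_path_of_strict_decay I sigma rho phimin phimax Hrho Hmin Hmax
    Hlinf Hcont Hmono Hbounds Ii gam mu Hgain Hdecay).
Qed.
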